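(* Let $(p,f)$ be an SCF-RT that is rationalizable within the class of symmetric RUM-CFs, and let $(x,y)\in C\setminus D$. If there exists $z\in X$ such that $t(x,z)$ and $t(y,z)$ are defined and $t(x,z)\leq t(y,z)$, or $t(z,x)$ and $t(z,y)$ are defined and $t(z,x)\geq t(z,y)$, then every symmetric RUM-CF $(u,g,r)$ rationalizing $(p,f)$ satisfies $u(x)\geq u(y)$. If there exists $z\in X$ with $t(x,z)<t(y,z)$ or $t(z,x)>t(z,y)$ (the respective quantities being defined), then every such model satisfies $u(x)>u(y)$.
   Context: $X$ is a finite set of options; $C=\{(x,y): x,y\in X,\ x\neq y\}$; $D\subseteq C$ is a fixed non-empty set with $(x,y)\in D\Rightarrow (y,x)\in D$. An SCF $p$ assigns to each $(x,y)\in D$ a number $p(x,y)>0$ with $p(x,y)+p(y,x)=1$. An SCF-RT is a pair $(p,f)$ where $p$ is an SCF and $f$ assigns to each $(x,y)\in D$ a strictly positive density $f(x,y)$ on $\mathbb{R}^+$ with cdf $F(x,y)$. A RUM is a pair $(u,g)$ with $u:X\to\mathbb{R}$ and $g$ assigning to each $(x,y)\in C$ a density $g(x,y)$ on $\mathbb{R}$ (cdf $G(x,y)$) with $\int v\,g(x,y)(v)\,dv=u(x)-u(y)=:v(x,y)$, $g(x,y)(v)=g(y,x)(-v)$ for all $v$, and connected support. A RUM-CF is $(u,g,r)$ with $(u,g)$ a RUM and $r:\mathbb{R}^{++}\to\mathbb{R}^+$ continuous, strictly decreasing where $r(v)>0$, $\lim_{v\to0}r(v)=\infty$, $\lim_{v\to\infty}r(v)=0$;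 $r^{-1}(t)$ ($t>0$) is the inverse of $r$ restricted to $\{r>0\}$. It rationalizes $(p,f)$ if for all $(x,y)\in D$: $G(x,y)(0)=p(y,x)$ and $\frac{1-G(x,y)(r^{-1}(t))}{1-G(x,y)(0)}=F(x,y)(t)$ for all $t>0$. A RUM-CF is symmetric if each $g(x,y)$, $(x,y)\in C$, is symmetric around its mean: $g(x,y)(v(x,y)+\delta)=g(x,y)(v(x,y)-\delta)$ for all $\delta\geq0$. For $(a,b)\in D$ with $p(a,b)>p(b,a)$, $t(a,b)>0$ is defined by $F(a,b)(t(a,b))=p(b,a)/p(a,b)$; it is undefined otherwise. *)

From HB Require Import structures.
From mathcomp Require Import all_boot all_order all_algebra.
From mathcomp Require Import all_classical all_reals all_analysis.
Set Implicit Arguments. Unset Strict Implicit. Unset Printing Implicit Defensive.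
Import Order.TTheory GRing.Theory Num.Theory.
Import numFieldNormedType.Exports.
Local Open Scope classical_set_scope.
Local Open Scope ring_scope.

Section Defs.
Variable R : realType.
Notation mu := (@lebesgue_measure R).

Definition densityR (h : R -> R) : Prop :=
  measurable_fun setT h /\ (forall v, 0 <= h v) /\
  (\int[mu]_v (h v)%:E = 1)%E.

Definition cdfR (h : R -> R) (v : R) : R :=
  fine (\int[mu]_(w in `]-oo, (v%R:R)]) (h w)%:E)%E.

Definition pos_density (h : R -> R) : Prop :=
  measurable_fun `[(0%R:R), +oo[ h /\ (forall t, 0 <= t -> 0 < h t) /\
  (\int[mu]_(t in `[(0%R:R), +oo[) (h t)%:E = 1)%E.

Definition cdfRp (h : R -> R) (t : R) : R :=
  fine (\int[mu]_(w in `[(0%R:R), t]) (h w)%:E)%E.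

Variable X : finType.

Definition domain_ok (D : rel X) : Prop :=
  (forall x y, D x y -> x != y) /\ (exists x y, D x y) /\
  (forall x y, D x y -> D y x).

Definition SCF_RT (D : rel X) (p : X -> X -> R) (f : X -> X -> R -> R) : Prop :=
  forall x y, D x y ->
    0 < p x y /\ p x y + p y x = 1 /\ pos_density (f x y).

Definition connected_support (h : R -> R) : Prop :=
  forall a b c, a <= b -> b <= c -> 0 < h a -> 0 < h c -> 0 < h b.

(* RUM (u, g); g is given for every (x,y) in C, i.e. x != y *)
Definition RUM (u : X -> R) (g : X -> X -> R -> R) : Prop :=
  forall x y, x != y ->
    densityR (g x y) /\
    mu.-integrable setT (fun v => (v * g x y v)%:E) /\
    (\int[mu]_v (v * g x y v)%:E = (u x - u y)%:E)%E /\
    (forall v, g x y v = g y x (- v)) /\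
    connected_support (g x y).

(* the cost function r : R^{++} -> R^+ (only its values on (0,+oo) matter) *)
Definition cost_fun (r : R -> R) : Prop :=
  (forall v, 0 < v -> 0 <= r v) /\
  (forall v, 0 < v -> {for v, continuous r}) /\
  (forall v w, 0 < v -> v < w -> 0 < r v -> 0 < r w -> r w < r v) /\
  (r x @[x --> 0^'+] --> +oo) /\
  (r x @[x --> +oo] --> 0).

Definition RUM_CF (u : X -> R) (g : X -> X -> R -> R) (r : R -> R) : Prop :=
  RUM u g /\ cost_fun r.

Definition symmetric_RUM_CF (u : X -> R) (g : X -> X -> R -> R) (r : R -> R)
  : Prop :=
  RUM_CF u g r /\
  (forall x y, x != y -> forall d, 0 <= d ->
     g x y (u x - u y + d) = g x y (u x - u y - d)).

(* v = r^{-1}(t): the (unique) v in {r > 0} with r v = t, for t > 0 *)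
Definition is_rinv (r : R -> R) (t v : R) : Prop := 0 < v /\ r v = t.

Definition rationalizes (D : rel X) (p : X -> X -> R) (f : X -> X -> R -> R)
  (u : X -> R) (g : X -> X -> R -> R) (r : R -> R) : Prop :=
  forall x y, D x y ->
    cdfR (g x y) 0 = p y x /\
    (forall t, 0 < t -> forall v, is_rinv r t v ->
       (1 - cdfR (g x y) v) / (1 - cdfR (g x y) 0) = cdfRp (f x y) t).

(* tau = t(a,b): defined iff (a,b) in D and p(a,b) > p(b,a) *)
Definition t_is (D : rel X) (p : X -> X -> R) (f : X -> X -> R -> R)
  (a b : X) (tau : R) : Prop :=
  D a b /\ p b a < p a b /\ 0 < tau /\ cdfRp (f a b) tau = p b a / p a b.

End Defs.

From HB Require Import structures.
From mathcomp Require Import all_boot all_order all_algebra.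
From mathcomp Require Import all_classical all_reals all_analysis.
From mathcomp Require Import lra measurable_realfun.
Import Order.TTheory GRing.Theory Num.Theory.
Import numFieldNormedType.Exports.
Set Implicit Arguments. Unset Strict Implicit.
Local Open Scope classical_set_scope.
Local Open Scope ring_scope.

(* For a pair (a, b) with t(a, b) defined, let m = u(a) - u(b) and let G be
   the cdf of g(a, b).  Symmetry of g(a, b) around m gives
   G(2m) = 1 - G(0) = p(a, b), and the rationalization identity at
   t = t(a, b) gives G(r^-1(t)) = p(a, b).  As g(a, b) has connected support,
   G is injective where 0 < G < 1, so r^-1(t(a, b)) = 2m, i.e.
   t(a, b) = r(2 (u(a) - u(b))) with u(a) > u(b).  Since r is strictly
   decreasing where positive, comparing t(x, z) with t(y, z), or t(z, x) with
   t(z, y), compares u(x) with u(y). *)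

Section Reflection.
Variables (R : realType) (c : R).
Local Notation mu := (@lebesgue_measure R).
Local Notation mirror :=
  (fun w : measurableTypeR R => c - w : measurableTypeR R).

Lemma measurable_reflect : measurable_fun [set: measurableTypeR R] mirror.
Proof. by apply: measurable_funB => //; exact: measurable_cst. Qed.

Lemma pushforward_reflect_lebesgue (A : set R) : measurable A ->
  pushforward mu mirror A = mu A.
Proof.
move=> mA; apply/esym/lebesgue_measure_unique => //=.
  exact: measurable_reflect.
move=> _ _ [[a b]] _ <-; rewrite /pushforward /=.
have -> : (fun w : R => c - w) @^-1` `]a, b] = `[c - b, c - a[%classic.
  by apply/seteqP; split=> w /=; rewrite !in_itv /= => /andP[? ?];
    apply/andP; split; lra.
rewrite !lebesgue_measure_itv /= !lte_fin -!EFinD.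
have -> : (c - b < c - a) = (a < b) by apply/idP/idP; lra.
by case: ifPn => // _; congr (_%:E); lra.
Qed.

Lemma ge0_integral_reflect (k : R -> \bar R) (A : set R) :
  measurable A -> measurable_fun setT k -> (forall w, (0 <= k w)%E) ->
  (\int[mu]_(w in A) k w = \int[mu]_(w in mirror @^-1` A) k (c - w)%R)%E.
Proof.
move=> mA mk k0.
have := ge0_integral_pushforward measurable_reflect mu mA
  (measurable_funS _ _ mk) (fun w _ => k0 w).
rewrite /comp => <- //.
apply: eq_measure_integral => //=; first exact: measurable_reflect.
by move=> _ B mB _; rewrite pushforward_reflect_lebesgue.
Qed.

End Reflection.

Section Density.
Variables (R : realType) (h : R -> R).
Hypothesis hd : densityR h.
Local Notation mu := (@lebesgue_measure R).
Local Notation mass A := (\int[mu]_(w in A) (h w)%:E)%E.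

Lemma density_ge0 w : 0 <= h w.
Proof. by case: hd => _ []. Qed.

Lemma measurable_density : measurable_fun setT (fun w => (h w)%:E).
Proof. by apply/measurable_EFinP; case: hd. Qed.

Lemma mass_ge0 (A : set R) : (0 <= mass A)%E.
Proof. by apply: integral_ge0 => w _; rewrite lee_fin density_ge0. Qed.

Lemma massE (A : set R) : measurable A -> mass A = (fine (mass A))%:E.
Proof.
move=> mA; rewrite fineK // ge0_fin_numE ?mass_ge0 //.
apply: (@le_lt_trans _ _ (mass [set: R])).
  apply: ge0_subset_integral => //; first exact: measurable_density.
  by move=> w _; rewrite lee_fin density_ge0.
by case: hd => _ [_ ->]; rewrite ltry.
Qed.

Lemma mass_setU (A B : set R) : measurable A -> measurable B ->
  [disjoint A & B] -> mass (A `|` B) = (mass A + mass B)%E.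
Proof.
move=> mA mB AB; apply: ge0_integral_setU => //.
- exact: measurable_funS measurable_density.
- by move=> w _; rewrite lee_fin density_ge0.
Qed.

Lemma mass_gt0_support (A : set R) :
  (0 < mass A)%E -> exists2 w, A w & 0 < h w.
Proof.
apply: contraPP => /forall2NP h0; rewrite integral0_eq ?ltxx // => w Aw.
case: (h0 w) => // /negP; rewrite -leNgt => hw0.
by congr (_%:E); apply/eqP; rewrite eq_le hw0 density_ge0.
Qed.

Lemma mass_itv_gt0 a b : a < b -> (forall w, a < w <= b -> 0 < h w) ->
  (0 < mass `]a, b])%E.
Proof.
move=> ab hpos; rewrite lt0e mass_ge0 andbT; apply/negP => /eqP mass0.
have mab : measurable (`]a, b] : set R) by [].
have : (\int[mu]_(w in `]a, b]) `|(h w)%:E| = 0)%E.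
  rewrite -mass0; apply: eq_integral => w _.
  by rewrite gee0_abs // lee_fin density_ge0.
move/(ae_eq_integral_abs mu mab (measurable_funS _ _ measurable_density)).
move=> /(_ measurableT (@subsetT _ _)) [N [mN N0 sub]].
have abN : `]a, b]%classic `<=` N.
  move=> w abw; apply: sub => /= /(_ abw) /eqP; rewrite eqe => /eqP hw0.
  by move: abw; rewrite /= in_itv => /hpos; rewrite hw0 ltxx.
have : (mu `]a, b]%classic <= 0)%E.
  by rewrite -N0; apply: le_measure => //; rewrite inE.
rewrite lebesgue_measure_itv /= lte_fin ab -EFinD lee_fin; lra.
Qed.

Lemma cdfR_itv_split a b : a <= b -> cdfR h b = cdfR h a + fine (mass `]a, b]).
Proof.
move=> ab.
have split_b :
    `]-oo, b]%classic = `]-oo, a]%classic `|` `]a, b]%classic :> set R.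
  apply/seteqP; split => w /=; rewrite !in_itv /=.
  - by move=> wb; case: (leP w a) => wa; [left|right; apply/andP; split].
  - by case=> [wa|/andP[_ ->//]]; apply: le_trans wa ab.
rewrite /cdfR split_b mass_setU //; last first.
  by apply/disj_setPS => w [] /=; rewrite !in_itv /=; lra.
by rewrite (massE (A := `]-oo, a]%classic)) // (massE (A := `]a, b]%classic)).
Qed.

Lemma cdfR_compl s : cdfR h s = 1 - fine (mass `]s, +oo[).
Proof.
have split_setT : [set: R] = `]-oo, s] `|` `]s, +oo[.
  apply/seteqP; split => w //= _; rewrite !in_itv /= andbT.
  by case: (leP w s); [left|right].
have : mass [set: R] = 1%E by case: hd => _ [].
rewrite split_setT mass_setU //; last first.
  by apply/disj_setPS => w [] /=; rewrite !in_itv /= andbT; lra.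
rewrite (massE (A := `]-oo, s]%classic)) // (massE (A := `]s, +oo[%classic)) //.
by rewrite -EFinD => -[<-]; rewrite /cdfR addrK.
Qed.

Lemma cdfR_gt0_support a : 0 < cdfR h a -> exists2 w, w <= a & 0 < h w.
Proof.
rewrite /cdfR -lte_fin -massE // => /mass_gt0_support[w].
by rewrite /= in_itv /=; exists w.
Qed.

Lemma cdfR_lt1_support b : cdfR h b < 1 -> exists2 w, b < w & 0 < h w.
Proof.
rewrite cdfR_compl gtrBl -lte_fin -massE // => /mass_gt0_support[w].
by rewrite /= in_itv /= andbT; exists w.
Qed.

Lemma cdfR_lt a b : connected_support h -> a < b ->
  0 < cdfR h a -> cdfR h b < 1 -> cdfR h a < cdfR h b.
Proof.
move=> hconn ab /cdfR_gt0_support[w1 w1a hw1] /cdfR_lt1_support[w2 bw2 hw2].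
rewrite (cdfR_itv_split (ltW ab)) ltrDl -lte_fin -massE //.
apply: mass_itv_gt0 => // w /andP[aw wb].
apply: (hconn w1 w w2) => //; first exact: le_trans (ltW aw).
exact: ltW (le_lt_trans wb bw2).
Qed.

Lemma cdfR_inj a b : connected_support h -> 0 < cdfR h a < 1 ->
  cdfR h a = cdfR h b -> a = b.
Proof.
move=> hconn /andP[Ga0 Ga1] Gab; case: (ltgtP a b) => // [ab|ba].
- by have := cdfR_lt hconn ab Ga0; rewrite -Gab ltxx => /(_ Ga1).
- by have := cdfR_lt hconn ba; rewrite -Gab ltxx => /(_ Ga0 Ga1).
Qed.

Lemma cdfR_reflect c s : (forall w, h (c - w) = h w) ->
  cdfR h (c - s) = 1 - cdfR h s.
Proof.
move=> hsym; rewrite [in RHS]cdfR_compl subKr /cdfR.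
rewrite (ge0_integral_reflect c) //; last 2 first.
- exact: measurable_density.
- by move=> w; rewrite lee_fin density_ge0.
have -> : (fun w => c - w) @^-1` `]-oo, c - s] = `[s, +oo[%classic.
  by apply/seteqP; split => w /=; rewrite !in_itv /= ?andbT; lra.
rewrite integral_itv_obnd_cbnd; last exact: measurable_funS measurable_density.
by congr (fine _); apply: eq_integral => w _; rewrite hsym.
Qed.

End Density.

Section CostFunction.
Variables (R : realType) (r : R -> R).
Hypothesis rcost : cost_fun r.

Lemma cost_fun_rinv_exists t : 0 < t -> exists v, is_rinv r t v.
Proof.
case: rcost => _ [rcont [_ [r0 roo]]] t0.
have [a [ta a0]] : exists a, t < r a /\ 0 < a.
  apply: (filter_ex (F := 0^'+)); near=> a; split; near: a.
  - by move/cvgryPgt: r0; apply.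
  - exact: nbhs_right_gt.
have [b [rbt ab]] : exists b, r b < t /\ a < b.
  apply: (filter_ex (F := +oo)); near=> b; split; near: b.
  - move/cvgrPdist_lt: roo => /(_ t t0); apply: filterS => b.
    by rewrite sub0r normrN; exact: le_lt_trans (ler_norm _).
  - exact: nbhs_pinfty_gt (num_real a).
have rcont_ab : {within `[a, b], continuous r}.
  apply: continuous_in_subspaceT => w; rewrite inE /= in_itv /= => /andP[aw _].
  exact: rcont w (lt_le_trans a0 aw).
have t_between : Num.min (r a) (r b) <= t <= Num.max (r a) (r b).
  have rba := ltW (lt_trans rbt ta).
  by rewrite (min_idPr rba) (max_idPl rba) !ltW.
have [v] := IVT (ltW ab) rcont_ab t_between.
rewrite in_itv /= => /andP[av _] rvt.
by exists v; split=> //; exact: lt_le_trans a0 av.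
Unshelve. all: by end_near.
Qed.

Lemma cost_fun_nmono :
  {in [pred v | (0 < v) && (0 < r v)] &, {mono r : v w /~ v <= w}}.
Proof.
apply: le_nmono_in => v w; rewrite !inE => /andP[_ rv0] /andP[w0 rw0] wv.
by case: rcost => _ [_ [rdec _]]; exact: rdec.
Qed.

End CostFunction.

Lemma reflect_about_center (R : realFieldType) (h : R -> R) (m : R) :
  (forall d, 0 <= d -> h (m + d) = h (m - d)) -> forall w, h (2 * m - w) = h w.
Proof.
move=> hsym w; have [mw|wm] := leP m w.
- have := hsym (w - m); rewrite subr_ge0 => /(_ mw).
  by rewrite (_ : m + (w - m) = w) 1?(_ : m - (w - m) = 2 * m - w) //; lra.
- have := hsym (m - w); rewrite subr_ge0 => /(_ (ltW wm)).
  by rewrite (_ : m + (m - w) = 2 * m - w) 1?(_ : m - (m - w) = w) //; lra.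
Qed.

Section Rationalized.
Variables (R : realType) (X : finType) (D : rel X).
Variables (p : X -> X -> R) (f : X -> X -> R -> R).
Variables (u : X -> R) (g : X -> X -> R -> R) (r : R -> R).
Hypotheses (Dok : domain_ok D) (pf : SCF_RT D p f).
Hypotheses (ugr : symmetric_RUM_CF u g r) (ugr_rat : rationalizes D p f u g r).

Lemma t_is_cost a b tau : t_is D p f a b tau ->
  0 < u a - u b /\ r (2 * (u a - u b)) = tau.
Proof.
case: Dok => Dneq [_ Dsym] [Dab [_ [tau0 Ftau]]].
have [[rum rcost] gsym] := ugr; have ab := Dneq _ _ Dab.
have [gdens [_ [_ [_ gconn]]]] := rum a b ab.
have [G0 Gt] := ugr_rat Dab.
have [pab0 [psum _]] := pf Dab; have [pba0 _] := pf (Dsym _ _ Dab).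
have [v [v0 rv]] := cost_fun_rinv_exists rcost tau0.
have G2m : cdfR (g a b) (2 * (u a - u b)) = p a b.
  rewrite -[X in cdfR _ X]subr0 (cdfR_reflect gdens) ?G0; first lra.
  exact: reflect_about_center (gsym a b ab).
have Gv : cdfR (g a b) v = p a b.
  have := Gt tau tau0 v (conj v0 rv).
  rewrite Ftau G0 (_ : 1 - p b a = p a b); last lra.
  by move/(congr1 ( *%R^~ (p a b))); rewrite !divfK ?gt_eqF //; lra.
have v2m : v = 2 * (u a - u b).
  by apply: (cdfR_inj gdens gconn); rewrite ?Gv ?G2m // pab0; lra.
by split; [lra | rewrite -v2m].
Qed.

Lemma t_is_le a b a' b' t1 t2 : t_is D p f a b t1 -> t_is D p f a' b' t2 ->
  (t1 <= t2) = (u a' - u b' <= u a - u b).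
Proof.
move=> T1 T2; have [m1 e1] := t_is_cost T1; have [m2 e2] := t_is_cost T2.
have [_ [_ [t1_gt0 _]]] := T1; have [_ [_ [t2_gt0 _]]] := T2.
rewrite -e1 -e2 (cost_fun_nmono ugr.1.2) ?ler_pM2l //.
all: by rewrite inE ?e1 ?e2 ?mulr_gt0.
Qed.

Lemma t_is_lt a b a' b' t1 t2 : t_is D p f a b t1 -> t_is D p f a' b' t2 ->
  (t1 < t2) = (u a' - u b' < u a - u b).
Proof.
move=> T1 T2; have [m1 e1] := t_is_cost T1; have [m2 e2] := t_is_cost T2.
have [_ [_ [t1_gt0 _]]] := T1; have [_ [_ [t2_gt0 _]]] := T2.
rewrite -e1 -e2 (leW_nmono_in (cost_fun_nmono ugr.1.2)) ?ltr_pM2l //.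
all: by rewrite inE ?e1 ?e2 ?mulr_gt0.
Qed.

End Rationalized.

Theorem theorem2 (R : realType) (X : finType) (D : rel X)
  (p : X -> X -> R) (f : X -> X -> R -> R) :
  domain_ok D ->
  SCF_RT D p f ->
  (exists u g r, symmetric_RUM_CF u g r /\ rationalizes D p f u g r) ->
  forall x y : X, x != y -> ~~ D x y ->
  ((exists z : X,
      (exists t1 t2, t_is D p f x z t1 /\ t_is D p f y z t2 /\ t1 <= t2) \/
      (exists t1 t2, t_is D p f z x t1 /\ t_is D p f z y t2 /\ t2 <= t1)) ->
    forall u g r, symmetric_RUM_CF u g r -> rationalizes D p f u g r ->
      u y <= u x) /\
  ((exists z : X,
      (exists t1 t2, t_is D p f x z t1 /\ t_is D p f y z t2 /\ t1 < t2) \/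
      (exists t1 t2, t_is D p f z x t1 /\ t_is D p f z y t2 /\ t2 < t1)) ->
    forall u g r, symmetric_RUM_CF u g r -> rationalizes D p f u g r ->
      u y < u x).
Proof.
move=> Dok pf _ x y _ _.
split=> -[z [[t1 [t2 [T1 [T2 t12]]]] | [t1 [t2 [T1 [T2 t21]]]]]]
  u g r ugr ugr_rat.
- by move: t12; rewrite (t_is_le Dok pf ugr ugr_rat T1 T2); lra.
- by move: t21; rewrite (t_is_le Dok pf ugr ugr_rat T2 T1); lra.
- by move: t12; rewrite (t_is_lt Dok pf ugr ugr_rat T1 T2); lra.
- by move: t21; rewrite (t_is_lt Dok pf ugr ugr_rat T2 T1); lra.
Qed.
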